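(* Let $k<\omega$ and let $\mathcal E\subseteq\mathcal P(\omega)$ have the property that for every uncountable $X\subseteq\mathcal E$ there are uncountable $X_0,\dots,X_k\subseteq X$ with $\bigcap_{i\le k}\bigcup X_i$ finite. Let $\mathcal A=\{f_e:e\in\mathcal E\}$, where each $f_e$ is a function from $e$ to $\omega$ (viewed as a subset of $\omega\times\omega$). Then $\mathcal A$ has no uncountable $(k+1)$-near-Luzin subfamily: for every uncountable $\mathcal B\subseteq\mathcal A$ there are uncountable $\mathcal C_0,\dots,\mathcal C_k\subseteq\mathcal B$ with $\bigcap_{i\le k}\bigcup\mathcal C_i$ finite.
   Context: An uncountable family $\mathcal A$ is $(k+1)$-near-Luzin iff for all uncountable $\mathcal C_0,\dots,\mathcal C_k\subseteq\mathcal A$ the set $\bigcap_{i\le k}\bigcup\mathcal C_i$ is infinite. *)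

From mathcomp Require Import all_boot.
From mathcomp Require Export classical_sets cardinality.
Set Implicit Arguments. Unset Strict Implicit. Unset Printing Implicit Defensive.
Local Open Scope classical_set_scope.

Definition has_finite_cross (T : Type) (m : nat) (F : set (set T)) : Prop :=
  exists C : nat -> set (set T),
    (forall i, (i < m)%N -> C i `<=` F /\ ~ countable (C i)) /\
    finite_set (\bigcap_(i in [set i | (i < m)%N]) \bigcup_(x in C i) x).

Definition graph_on (e : set nat) (g : nat -> nat) : set (nat * nat) :=
  [set p | e p.1 /\ p.2 = g p.1].

From mathcomp Require Import all_boot.
From mathcomp Require Import classical_sets cardinality.
From mathcomp Require Import boolp.
Local Open Scope classical_set_scope.

(* A graph determines its domain, so uncountably many graphs in B come from
   uncountably many domains in E; these split as C_0, ..., C_k with the finite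
   set S := \bigcap_i \bigcup C_i. Sorting each C_i by the restriction of f_e
   to S (a countable invariant) leaves an uncountable class of domains on which
   f_e agrees on S. Any point (n, m) in every union of graphs of these classes
   has n in S and m among the common values on S, so the graphs also split. *)

Lemma countable_image {T U} (g : T -> U) (A : set T) :
  countable A -> countable (g @` A).
Proof. exact: sub_countable (card_image_le g A). Qed.

Lemma not_countable_fiber {T} {K : countType} {C : set T} (key : T -> K) :
  ~ countable C -> exists l, ~ countable [set x | C x /\ key x = l].
Proof.
move=> nC; apply: contra_notP nC => /forallNP fibers.
have C_sub : C `<=` \bigcup_(l in [set: K]) [set x | C x /\ key x = l].
  by move=> x Cx; exists (key x).
apply: sub_countable (subset_card_le C_sub) _.
apply: bigcup_countable => [|l _]; first exact: countableP.
exact: contrapT (fibers l).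
Qed.

Lemma image_fst_graph_on (e : set nat) (g : nat -> nat) : fst @` graph_on e g = e.
Proof.
apply/seteqP; split => [_ [[n m] [en _] <-] //|n en].
by exists (n, g n).
Qed.

Section GraphsOfFamily.
Variable f : set nat -> nat -> nat.

Let graph e := graph_on e (f e).

Lemma countable_of_graph_on_image (D : set (set nat)) :
  countable (graph @` D) -> countable D.
Proof.
move=> /(countable_image (fun P : set (nat * nat) => fst @` P)).
apply: sub_countable; apply: subset_card_le => e De.
by exists (graph e); [exists e | exact: image_fst_graph_on].
Qed.

Lemma not_countable_graph_on_domains (E : set (set nat))
    (B : set (set (nat * nat))) :
  B `<=` graph @` E -> ~ countable B ->
  ~ countable [set e | E e /\ B (graph e)].
Proof.
move=> BE nB /(countable_image graph) cX; apply: nB.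
apply: sub_countable cX; apply: subset_card_le => b Bb.
have [e Ee ebE] := BE b Bb.
by rewrite -ebE in Bb *; exists e.
Qed.

Lemma bigcap_bigcup_graph_on_sub (m : nat) (D : nat -> set (set nat))
    (S l : seq nat) : (0 < m)%N ->
  \bigcap_(i in [set i | (i < m)%N]) \bigcup_(e in D i) e `<=` [set` S] ->
  (forall e, D 0%N e -> [seq f e n | n <- S] = l) ->
  \bigcap_(i in [set i | (i < m)%N]) \bigcup_(p in graph @` D i) p
    `<=` [set` S] `*` [set` l].
Proof.
move=> m_gt0 capS D0l [n v] nv_cap.
have nS : [set` S] n.
  apply: capS => i lt_im.
  have [_ [e De <-] [en _]] := nv_cap i lt_im.
  by exists e.
split => //=.
have [_ [e De0 <-] [_ /= ->]] := nv_cap 0%N m_gt0.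
by rewrite -(D0l e De0); apply: map_f.
Qed.

End GraphsOfFamily.

Theorem lemma5p6 (k : nat) (E : set (set nat))
  (hE : forall X : set (set nat), X `<=` E -> ~ countable X ->
          has_finite_cross k.+1 X)
  (f : set nat -> nat -> nat) :
  let A := [set graph_on e (f e) | e in E] in
  forall B : set (set (nat * nat)), B `<=` A -> ~ countable B ->
    has_finite_cross k.+1 B.
Proof.
move=> A B BA nB.
pose X := [set e | E e /\ B (graph_on e (f e))].
have [C [C_X C_fin]] := hE X (fun e => @proj1 _ _)
  (@not_countable_graph_on_domains f E B BA nB).
have [S capS] := (finite_seqP _).1 C_fin.
pose cls i l := [set e | C i e /\ [seq f e n | n <- S] = l].
have uncountable_cls i : exists l, (i < k.+1)%N -> ~ countable (cls i l).
  have [lt_ik|_] := ltnP i k.+1; last by exists [::].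
  have [l nl] := not_countable_fiber
    (fun e => [seq f e n | n <- S]) (C_X i lt_ik).2.
  by exists l.
have [L L_nc] := choice uncountable_cls.
exists (fun i => [set graph_on e (f e) | e in cls i (L i)]); split.
  move=> i lt_ik; split; last by move/countable_of_graph_on_image; exact: L_nc.
  by move=> _ [e [Ce _] <-]; exact: ((C_X i lt_ik).1 e Ce).2.
apply: sub_finite_set (finite_setX (finite_seq S) (finite_seq (L 0%N))).
apply: (@bigcap_bigcup_graph_on_sub f _ (fun i => cls i (L i)) S (L 0%N)
  (ltn0Sn k)) => [|e [] //].
rewrite -capS => n /= n_cap i lt_ik.
by have [e [Ce _] en] := n_cap i lt_ik; exists e.
Qed.
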